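(* For every integer $m\ge2$, the Bernoulli numbers satisfy $$B_{2m}=\frac{-1}{(m+1)(2m+1)}\sum_{j=m-\lfloor m/2\rfloor}^{m-1}\binom{m+1}{2m-2j+1}(1+2j)\,B_{2j}.$$
   Context: $B_m$ denotes the Bernoulli numbers, defined by $\frac{t}{e^t-1}=\sum_{m\ge0}B_m\frac{t^m}{m!}$ (so $B_2=1/6$, $B_4=-1/30$). *)

From HB Require Import structures.
From mathcomp Require Import all_boot all_order all_algebra.
Set Implicit Arguments. Unset Strict Implicit. Unset Printing Implicit Defensive.
Import Order.TTheory GRing.Theory Num.Theory.
Local Open Scope ring_scope.

(* Generating function t/(e^t-1) = sum_m B_m t^m/m!.  Writing b_m = B_m/m!,
   the defining identity ((e^t-1)/t) * (sum_m b_m t^m) = 1 of formal power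
   series reads, coefficientwise,  sum_{k<=n} b_k / (n+1-k)! = [n = 0],
   i.e. b_0 = 1 and b_n = - sum_{k<n} b_k / (n+1-k)! for n >= 1.
   bern_seq n = [:: b_0; ...; b_n]. *)
Fixpoint bern_seq (n : nat) : seq rat :=
  match n with
  | 0 => [:: 1]
  | n'.+1 =>
      let s := bern_seq n' in
      rcons s (- \sum_(k < n'.+1) s`_k / ((n'.+2 - k)`!)%:R)
  end.

(* Bernoulli number B_n (so B_1 = -1/2, B_2 = 1/6, B_4 = -1/30). *)
Definition bernoulli (n : nat) : rat := (n`!)%:R * (bern_seq n)`_n.

From HB Require Import structures.
From mathcomp Require Import all_boot all_order all_algebra zify.
Import GRing.Theory Num.Theory.
Local Open Scope ring_scope.

(* Let L be the umbral functional on Q[X] with L(X^n) = B_n.  The recurrence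
   sum_(k<n) C(n,k) B_k = [n = 1] says that L(p(X+1)) - L(p) = p'(0).  Hence
   p |-> L(p(-1-X)) - L(p) is invariant under X -> X+1, and a translation-
   invariant linear functional on Q[X] vanishes: L is invariant under the
   reflection X -> -1-X.  This gives B_n = 0 for odd n > 1, and L(q') = 0 for
   every reflection-symmetric q.  For q = (X(X+1))^(m+1) the latter reads
   sum_k C(m+1,k) (m+1+k) B_(m+k) = 0; the odd indices drop out, the top term
   is (m+1)(2m+1) B_(2m), and the terms with 2j < m vanish with their
   binomial coefficient. *)

Lemma scalar_polyE {R : nzRingType} (F : {scalar {poly R}}) (p : {poly R}) :
  F p = \sum_(i < size p) p`_i * F 'X^i.
Proof.
rewrite -[in LHS](comp_polyXr p) comp_polyE linear_sum.
by apply: eq_bigr => i _; rewrite linearZ.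
Qed.

Lemma shift_invariant_scalar_eq0 {R : idomainType} (F : {scalar {poly R}}) :
  [pchar R] =i pred0 -> (forall p, F (p \Po ('X + 1)) = F p) -> forall p, F p = 0.
Proof.
move=> /pcharf0P natf_eq0 F_shift.
suff FXn n : F 'X^n = 0.
  by move=> p; rewrite scalar_polyE big1 // => i _; rewrite FXn mulr0.
elim/ltn_ind: n => n IH.
have := F_shift 'X^(n.+1).
rewrite comp_Xn_poly exprD1n linear_sum big_ord_recr /= binn mulr1n.
move/(canRL (addrK _)); rewrite subrr big_ord_recr /= big1 => [|i _]; last first.
  by rewrite linearMn IH ?mul0rn.
rewrite add0r linearMn binSn -mulr_natr => /eqP.
by rewrite mulf_eq0 natf_eq0 orbF => /eqP.
Qed.

Lemma size_bern_seq n : size (bern_seq n) = n.+1.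
Proof. by elim: n => //= n IH; rewrite size_rcons IH. Qed.

Lemma nth_bern_seq n k : (k <= n)%N -> (bern_seq n)`_k = (bern_seq k)`_k.
Proof.
elim: n => [|n IH]; first by rewrite leqn0 => /eqP ->.
rewrite leq_eqVlt => /predU1P [-> // | lt_kn].
by rewrite /= nth_rcons size_bern_seq lt_kn IH.
Qed.

Lemma bern_seq_rec n :
  \sum_(k < n.+2) (bern_seq k)`_k / ((n.+2 - k)`!)%:R = 0.
Proof.
rewrite big_ord_recr /= nth_rcons size_bern_seq ltnn eqxx subSnn divr1.
apply/eqP; rewrite subr_eq0; apply/eqP.
by apply: eq_bigr => k _; rewrite (nth_bern_seq n) // -ltnS.
Qed.

Lemma bernoulli_binomial_sum n :
  \sum_(k < n) 'C(n, k)%:R * bernoulli k = (n == 1)%N%:R.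
Proof.
case: n => [|[|n]]; [by rewrite big_ord0 | by rewrite big_ord1 |].
rewrite -[RHS](mulr0 (n.+2)`!%:R) -[in RHS](bern_seq_rec n) mulr_sumr.
apply: eq_bigr => k _.
rewrite /bernoulli -(bin_fact (ltnW (ltn_ord k))) !natrM.
have fact_neq0 : ((n.+2 - k)`!)%:R != 0 :> rat by rewrite pnatr_eq0 -lt0n fact_gt0.
by rewrite -[in RHS]mulrA mulrACA mulfV ?mulr1.
Qed.

Lemma coef1_comp_polyNX (R : nzRingType) (p : {poly R}) : (p \Po - 'X)`_1 = - p`_1.
Proof.
rewrite coef_comp_poly [p`_1](scalar_polyE (coefp 1)) -sumrN.
apply: eq_bigr => -[[|[|i]] _] _ /=.
- by rewrite !expr0 coef1 mulr0 oppr0.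
- by rewrite !expr1 coefN coefX mulrN.
- by rewrite coefXn mulr0 oppr0 !exprS mulrA mulrNN -expr2 coefXnM mulr0.
Qed.

Definition bernoulli_umbra (p : {poly rat}) : rat :=
  \sum_(i < size p) p`_i * bernoulli i.
Arguments bernoulli_umbra : simpl never.

Lemma bernoulli_umbra_widen n (p : {poly rat}) : (size p <= n)%N ->
  bernoulli_umbra p = \sum_(i < n) p`_i * bernoulli i.
Proof.
move=> le_p_n; rewrite /bernoulli_umbra.
rewrite (big_ord_widen n (fun i => p`_i * bernoulli i) le_p_n) big_mkcond /=.
by apply: eq_bigr => i _; case: ltnP => // le_p_i; rewrite nth_default ?mul0r.
Qed.

Fact bernoulli_umbra_is_linear : linear_for *%R bernoulli_umbra.
Proof.
move=> a p q; pose n := maxn (size p) (size q).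
have le_pq_n : (size (a *: p + q)%R <= n)%N.
  rewrite (leq_trans (size_polyD _ _)) // geq_max leq_maxr andbT.
  exact: leq_trans (size_scale_leq _ _) (leq_maxl _ _).
rewrite !(bernoulli_umbra_widen n) ?leq_maxl ?leq_maxr // mulr_sumr -big_split.
by apply: eq_bigr => i _; rewrite coefD coefZ mulrDl mulrA.
Qed.

HB.instance Definition _ :=
  GRing.isLinear.Build rat {poly rat} rat *%R bernoulli_umbra bernoulli_umbra_is_linear.

Lemma bernoulli_umbraXn n : bernoulli_umbra 'X^n = bernoulli n.
Proof.
rewrite /bernoulli_umbra size_polyXn big_ord_recr /= coefXn eqxx mul1r.
by rewrite big1 ?add0r // => i _; rewrite coefXn ltn_eqF ?mul0r.
Qed.

Lemma bernoulli_umbra_shiftXn n :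
  bernoulli_umbra (('X + 1) ^+ n) = bernoulli n + (n == 1)%N%:R.
Proof.
rewrite exprD1n linear_sum big_ord_recr /= binn mulr1n bernoulli_umbraXn addrC.
congr (_ + _); rewrite -bernoulli_binomial_sum; apply: eq_bigr => i _.
by rewrite linearMn /= bernoulli_umbraXn mulr_natl.
Qed.

Lemma bernoulli_umbra_shift p :
  bernoulli_umbra (p \Po ('X + 1)) = bernoulli_umbra p + p`_1.
Proof.
have /= -> := scalar_polyE (bernoulli_umbra \o comp_poly ('X + 1)) p.
have /= -> := scalar_polyE (coefp 1) p.
rewrite [bernoulli_umbra p]/bernoulli_umbra -big_split; apply: eq_bigr => i _.
by rewrite comp_Xn_poly bernoulli_umbra_shiftXn coefXn eq_sym mulrDr.
Qed.

Lemma bernoulli_umbra_reflect p :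
  bernoulli_umbra (p \Po (- 'X - 1)) = bernoulli_umbra p.
Proof.
have reflect_shift (q : {poly rat}) : q \Po (- 'X - 1) = (q \Po - 'X) \Po ('X + 1).
  by rewrite -comp_polyA raddfN /= comp_polyX opprD.
have shift_reflect (q : {poly rat}) : (q \Po ('X + 1)) \Po (- 'X - 1) = q \Po - 'X.
  by rewrite -comp_polyA raddfD /= comp_polyX rmorph1 subrK.
apply/eqP; rewrite -subr_eq0; apply/eqP; move: p.
apply: (shift_invariant_scalar_eq0
  (bernoulli_umbra \o comp_poly (- 'X - 1) \- bernoulli_umbra) (@pchar_num _)) => q /=.
rewrite shift_reflect !reflect_shift !bernoulli_umbra_shift coef1_comp_polyNX.
by rewrite opprD addrA addrAC.
Qed.

Lemma bernoulli_umbra_antisym p :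
  p \Po (- 'X - 1) = - p -> bernoulli_umbra p = 0.
Proof.
move=> p_anti; apply/eqP; rewrite -eqNr -{1}(bernoulli_umbra_reflect p) p_anti.
by rewrite linearN opprK.
Qed.

Lemma bernoulli_odd n : odd n -> n != 1%N -> bernoulli n = 0.
Proof.
move=> odd_n n_neq1; apply/eqP; rewrite -eqNr.
have := bernoulli_umbra_reflect 'X^n.
rewrite comp_Xn_poly -opprD exprNn -signr_odd odd_n expr1 mulN1r linearN /=.
by rewrite bernoulli_umbra_shiftXn bernoulli_umbraXn (negbTE n_neq1) addr0 => ->.
Qed.

Lemma bernoulli_umbra_deriv_sym p :
  p \Po (- 'X - 1) = p -> bernoulli_umbra p^`() = 0.
Proof.
move=> p_sym; apply: bernoulli_umbra_antisym.
have := deriv_comp p (- 'X - 1).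
rewrite p_sym derivB derivN derivX derivC subr0 mulrN1 => /eqP.
by rewrite eq_sym eqr_oppLR => /eqP.
Qed.

Lemma bernoulli_binomial_deriv_sum n :
  \sum_(k < n.+1) 'C(n, k)%:R * (n + k)%:R * bernoulli (n + k).-1 = 0.
Proof.
pose q : {poly rat} := ('X * ('X + 1)) ^+ n.
have q_sym : q \Po (- 'X - 1) = q.
  rewrite /q rmorphXn rmorphM /= rmorphD /= comp_polyX rmorph1 subrK.
  by rewrite -opprD mulrNN mulrC.
have q_expand : q = \sum_(k < n.+1) 'X^(n + k) *+ 'C(n, k).
  by rewrite /q exprMn exprD1n mulr_sumr; apply: eq_bigr => k _; rewrite mulrnAr exprD.
rewrite -[RHS](bernoulli_umbra_deriv_sym _ q_sym) q_expand raddf_sum linear_sum.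
apply: eq_bigr => k _ /=.
by rewrite derivMn derivXn !linearMn /= bernoulli_umbraXn -natrM mulr_natl -mulrnA mulnC.
Qed.

Lemma bernoulli_central_sum n :
  \sum_(i < (2 * n).+2) 'C(n.+1, (2 * n).+1 - i)%:R * i.+1%:R * bernoulli i = 0.
Proof.
rewrite -[RHS](bernoulli_binomial_deriv_sum n.+1).
rewrite (_ : (2 * n).+2 = n + n.+2)%N; last by lia.
rewrite big_split_ord /= big1 ?add0r => [|i _]; last first.
  by rewrite bin_small ?mul0r //; have := ltn_ord i; lia.
apply: eq_bigr => k _; have := ltn_ord k; rewrite ltnS => le_k.
by rewrite (_ : (2 * n).+1 - (n + k) = n.+1 - k)%N ?bin_sub //; lia.
Qed.

Lemma big_ord_even {V : nmodType} (f : nat -> V) n :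
  (forall i, odd i -> f i = 0) -> \sum_(i < 2 * n) f i = \sum_(j < n) f (2 * j)%N.
Proof.
move=> f_odd; elim: n => [|n IH]; first by rewrite !big_ord0.
have odd_term0 : f (2 * n).+1 = 0 by rewrite f_odd // oddS oddM.
by rewrite mulnSr addn2 !big_ord_recr /= IH odd_term0 addr0.
Qed.

Lemma bernoulli_central_sum_even {m} : (2 <= m)%N ->
  \sum_(0 <= j < m.+1) 'C(m.+1, (2 * m - 2 * j).+1)%:R * (1 + 2 * j)%:R * bernoulli (2 * j)
    = 0.
Proof.
move=> m_ge2; rewrite -[RHS](bernoulli_central_sum m).
rewrite (_ : (2 * m).+2 = 2 * m.+1)%N; last by lia.
pose f i := 'C(m.+1, (2 * m).+1 - i)%:R * i.+1%:R * bernoulli i.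
rewrite big_mkord (big_ord_even f) => [|i odd_i]; last first.
  have [-> | i_neq1] := eqVneq i 1%N; last by rewrite /f bernoulli_odd ?mulr0.
  by rewrite /f bin_small ?mul0r //; lia.
by apply: eq_bigr => j _; rewrite /f subSn ?add1n //; have := ltn_ord j; lia.
Qed.

Theorem mainTheorem5 (m : nat) (hm : (2 <= m)%N) :
  bernoulli (2 * m) =
    - 1 / ((m.+1)%:R * (2 * m).+1%:R) *
      \sum_(m - m./2 <= j < m)
        ('C(m.+1, (2 * m - 2 * j).+1))%:R * (1 + 2 * j)%:R * bernoulli (2 * j).
Proof.
have := bernoulli_central_sum_even hm.
rewrite big_nat_recr //= subnn bin1 add1n.
rewrite (big_cat_nat (n := m - m./2)) ?leq_subr //= big_nat_cond big1 ?add0r; last first.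
  by move=> j /andP [/andP [_ lt_j] _]; rewrite bin_small ?mul0r //; lia.
move/eqP; rewrite addr_eq0 => /eqP ->.
have c_neq0 : (m.+1)%:R * (2 * m).+1%:R != 0 :> rat by rewrite mulf_neq0 ?pnatr_eq0.
by rewrite mulN1r mulrNN mulKf.
Qed.
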